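(* Let $U\subset\mathbb{R}^n$ be an open set with coordinates $u^{i(\alpha)}$, $\alpha\in\{1,\dots,r\}$, $i\in\{1,\dots,m_\alpha\}$, where $n=m_1+\dots+m_r$, equipped with the commutative associative product $\circ$ with structure constants $c^{i(\alpha)}_{j(\beta)k(\gamma)}=\delta^\alpha_\beta\delta^\alpha_\gamma\delta^i_{j+k-1}$ and unit $e$ with components $e^{i(\alpha)}=\delta^i_1$. Let $X$ be a vector field on $U$ and let $\nabla$ be the torsionless connection on $U$ uniquely determined by the conditions $$\nabla_j e^i=0,\qquad c^i_{js}\nabla_kX^s-c^i_{ks}\nabla_jX^s=0,\qquad i,j,k\in\{1,\dots,n\}.$$ Let $Y$ be a vector field on $U$ satisfying $$(d_\nabla(Y\circ))^i_{jk}:=c^i_{js}\nabla_kY^s-c^i_{ks}\nabla_jY^s=0,\qquad i,j,k\in\{1,\dots,n\}.$$ Let $\mathbf{u}(x,t)=(u^1(x,t),\dots,u^n(x,t))$ be a (differentiable) function with values in $U$ satisfying the algebraic system $$x\,e^{i}+t\,X^{i}(\mathbf{u}(x,t))=Y^{i}(\mathbf{u}(x,t)),\qquad i\in\{1,\dots,n\}.$$ Then $\mathbf{u}(x,t)$ is a solution of the system of hydrodynamic type $$u^i_t=c^i_{jk}X^j(\mathbf{u})\,u^k_x,\qquad i\in\{1,\dots,n\}.$$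
   Context: Double-index notation: the index $i(\alpha)$ denotes the single index $m_1+\dots+m_{\alpha-1}+i$, and summation over repeated indices is understood. The coordinates are canonical (David–Hertling) coordinates of a regular F-manifold with Euler vector field, in which the Euler vector field has components $E^{i(\alpha)}=u^{i(\alpha)}$; in these coordinates the matrix $V^i_k=c^i_{jk}X^j$ is block-diagonal with $r$ blocks, the $\alpha$-th block being the $m_\alpha\times m_\alpha$ lower-triangular Toeplitz matrix with entries $V^{i(\alpha)}_{k(\alpha)}=X^{(i-k+1)(\alpha)}$ for $i\ge k$ and $0$ for $i<k$. The uniqueness of $\nabla$ holds under the standing assumptions that $X^{1(\alpha)}\neq X^{1(\beta)}$ for $\alpha\ne\beta$ and $X^{2(\alpha)}\neq 0$ for each $\alpha$. A vector field $Y$ with $d_\nabla(Y\circ)=0$ defines a symmetry $\mathbf{u}_\tau=Y\circ\mathbf{u}_x$ of the system. *)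

From HB Require Import structures.
From mathcomp Require Import all_boot all_order all_algebra.
From mathcomp Require Import all_classical all_reals all_analysis.
Set Implicit Arguments. Unset Strict Implicit. Unset Printing Implicit Defensive.
Import Order.TTheory GRing.Theory Num.Theory.
Import numFieldNormedType.Exports.
Local Open Scope ring_scope.

(* The block sizes are given by a sequence ms = [:: m_1; ...; m_r].
   Indices are 0-based: the single index p corresponds to the double index
   i(alpha) with alpha - 1 = blk ms p and i - 1 = pos ms p. *)

Definition bstart (ms : seq nat) (a : nat) : nat := sumn (take a ms).

(* block (0-based) containing the single index p (for p < sumn ms) *)
Definition blk (ms : seq nat) (p : nat) : nat :=
  \sum_(a < size ms) (bstart ms a.+1 <= p)%N.

Definition pos (ms : seq nat) (p : nat) : nat := (p - bstart ms (blk ms p))%N.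

Definition dbl (ms : seq nat) (a i : nat) : nat := (bstart ms a + i)%N.

(* structure constants c^p_{q s} = delta^alpha_beta delta^alpha_gamma
   delta^i_{j+k-1}  (in 0-based positions: i-1 = (j-1)+(k-1)) *)
Definition cst_F (R : ringType) (ms : seq nat) (p q s : nat) : R :=
  if [&& blk ms q == blk ms p, blk ms s == blk ms p &
         pos ms p == (pos ms q + pos ms s)%N] then 1 else 0.

Definition unit_F (R : ringType) (ms : seq nat) (p : nat) : R :=
  if pos ms p == 0%N then 1 else 0.

Section Calc.
Variables (R : realType) (n : nat).

Definition comp (Z : 'rV[R]_n -> 'rV[R]_n) (s : 'I_n) : 'rV[R]_n -> R :=
  fun u => Z u ord0 s.

Definition basis_vec (k : 'I_n) : 'rV[R]_n := delta_mx ord0 k.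

Definition pd (f : 'rV[R]_n -> R) (k : 'I_n) (u : 'rV[R]_n) : R :=
  derive f u (basis_vec k).

Definition cov (Gamma : 'I_n -> 'I_n -> 'I_n -> 'rV[R]_n -> R)
  (Z : 'rV[R]_n -> 'rV[R]_n) (k s : 'I_n) (u : 'rV[R]_n) : R :=
  pd (comp Z s) k u + \sum_(l < n) Gamma s k l u * Z u ord0 l.

Definition dnabla_circ (ms : seq nat)
  (Gamma : 'I_n -> 'I_n -> 'I_n -> 'rV[R]_n -> R)
  (Z : 'rV[R]_n -> 'rV[R]_n) (i j k : 'I_n) (u : 'rV[R]_n) : R :=
  \sum_(s < n) (cst_F R ms i j s * cov Gamma Z k s u
                - cst_F R ms i k s * cov Gamma Z j s u).

End Calc.

(* Fix (x, t) and put v = u(x, t).  If d_nabla (Z o) = 0 then nabla Z is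
   multiplication by W = nabla_e Z: use e o = id and then the symmetry
   c^i_{js} nabla_k Z^s = c^i_{ks} nabla_j Z^s.  Since d_nabla is linear this
   applies to the pencil Y - t X.  At v we have Y - t X = x e and nabla e = 0,
   so the Christoffel terms cancel and the Jacobian of Y - t X at v is itself
   multiplication by W.  Differentiating x e + t X(u) = Y(u) in x and in t
   gives W o u_x = e and W o u_t = X, hence
   u_t = (W o u_x) o u_t = u_x o (W o u_t) = X o u_x. *)

From Pilot Require Import Defs.
From HB Require Import structures.
From mathcomp Require Import all_boot all_order all_algebra.
From mathcomp Require Import all_classical all_reals all_analysis.
From mathcomp Require Import zify ring.
Import Order.TTheory GRing.Theory Num.Theory.
Import numFieldNormedType.Exports.
Local Open Scope ring_scope.
Set Implicit Arguments. Unset Strict Implicit.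

Section StructureConstants.
Variables (R : comPzRingType) (n : nat).
Variables (c : 'I_n -> 'I_n -> 'I_n -> R) (e : 'I_n -> R).
Hypothesis cC : forall i j k, c i j k = c i k j.
Hypothesis c_unit : forall i k, \sum_(j < n) e j * c i j k = (i == k)%:R.
Hypothesis cA : forall i j k l,
  \sum_(s < n) c i j s * c s k l = \sum_(s < n) c i s l * c s j k.

Lemma sum_delta (F : 'I_n -> R) i : \sum_(k < n) (i == k)%:R * F k = F i.
Proof.
rewrite (bigD1 i) //= eqxx mul1r big1 ?addr0 // => k hk.
by rewrite eq_sym (negbTE hk) mul0r.
Qed.

Lemma sum_unit_mul (F : 'I_n -> R) i :
  \sum_(k < n) \sum_(j < n) e j * c i j k * F k = F i.
Proof.
rewrite -[RHS]sum_delta; apply: eq_bigr => k _.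
by rewrite -c_unit mulr_suml.
Qed.

Definition cmul (a b : 'I_n -> R) (i : 'I_n) : R :=
  \sum_(j < n) \sum_(k < n) c i j k * a j * b k.

Definition cmul_mx (a : 'I_n -> R) (i k : 'I_n) : R :=
  \sum_(s < n) c i k s * a s.

Lemma cmulE a b i : cmul a b i = \sum_(k < n) cmul_mx a i k * b k.
Proof.
rewrite /cmul exchange_big; apply: eq_bigr => k _; rewrite mulr_suml.
by apply: eq_bigr => s _; rewrite cC mulrAC.
Qed.

Lemma cmulC a b : cmul a b = cmul b a.
Proof.
apply/funext => i; rewrite /cmul exchange_big.
by apply: eq_bigr => k _; apply: eq_bigr => j _; rewrite cC mulrAC.
Qed.

Lemma cmul1 b : cmul e b = b.
Proof.
apply/funext => i; rewrite /cmul exchange_big -[RHS](sum_unit_mul b).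
by apply: eq_bigr => k _; apply: eq_bigr => j _; rewrite (mulrC (c i j k)).
Qed.

Lemma cmul_expand a b d i : cmul a (cmul b d) i =
  \sum_(j < n) \sum_(k < n) \sum_(l < n)
    (\sum_(s < n) c i j s * c s k l) * (a j * b k * d l).
Proof.
rewrite /cmul; apply: eq_bigr => j _.
transitivity (\sum_(s < n) \sum_(k < n) \sum_(l < n)
                c i j s * c s k l * (a j * b k * d l)).
  apply: eq_bigr => s _; rewrite !mulr_sumr; apply: eq_bigr => k _.
  by rewrite !mulr_sumr; apply: eq_bigr => l _; ring.
rewrite exchange_big; apply: eq_bigr => k _; rewrite exchange_big.
by apply: eq_bigr => l _; rewrite mulr_suml.
Qed.

Lemma cmulA a b d : cmul a (cmul b d) = cmul (cmul a b) d.
Proof.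
apply/funext => i; rewrite (cmulC (cmul a b)) !cmul_expand [RHS]exchange_big.
apply: eq_bigr => j _; rewrite [RHS]exchange_big.
apply: eq_bigr => k _; apply: eq_bigr => l _.
rewrite cA (eq_bigr (fun s => c i l s * c s j k)) => [|s _]; last by rewrite cC.
by congr (_ * _); ring.
Qed.

Lemma cmul_solve w a b d : cmul w a = e -> cmul w b = d -> cmul d a = b.
Proof. by move=> wa wb; rewrite -wb (cmulC w) -cmulA wa (cmulC b) cmul1. Qed.

(* With A k s standing for (nabla_k Z)^s, this is d_nabla (Z o) = 0. *)
Definition circ_closed (A : 'I_n -> 'I_n -> R) :=
  forall i j k, \sum_(s < n) (c i j s * A k s - c i k s * A j s) = 0.

Lemma circ_closedB A B t : circ_closed A -> circ_closed B ->
  circ_closed (fun k s => A k s - t * B k s).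
Proof.
move=> hA hB i j k.
transitivity (\sum_(s < n) (c i j s * A k s - c i k s * A j s)
              - t * \sum_(s < n) (c i j s * B k s - c i k s * B j s)).
  by rewrite mulr_sumr -sumrB; apply: eq_bigr => s _; ring.
by rewrite hA hB mulr0 subr0.
Qed.

Lemma circ_closed_cmul_mx A : circ_closed A ->
  forall k i, A k i = cmul_mx (fun s => \sum_(j < n) e j * A j s) i k.
Proof.
move=> hA k i.
transitivity (\sum_(j < n) e j * \sum_(s < n) c i k s * A j s).
  rewrite -(sum_unit_mul (A k)) exchange_big; apply: eq_bigr => j _.
  apply/eqP; rewrite mulr_sumr -subr_eq0 -sumrB.
  rewrite (eq_bigr (fun s => e j * (c i j s * A k s - c i k s * A j s))).
    by rewrite -mulr_sumr hA mulr0.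
  by move=> s _; ring.
rewrite /cmul_mx; under eq_bigr do rewrite mulr_sumr.
rewrite exchange_big; apply: eq_bigr => s _; rewrite mulr_sumr.
by apply: eq_bigr => j _; ring.
Qed.
End StructureConstants.

Lemma bstart0 ms : bstart ms 0 = 0%N.
Proof. by case: ms. Qed.

Lemma bstartS m ms a : bstart (m :: ms) a.+1 = (m + bstart ms a)%N.
Proof. by []. Qed.

Lemma blk_cons m ms p :
  blk (m :: ms) p = if (p < m)%N then 0%N else (blk ms (p - m)).+1.
Proof.
rewrite /blk big_ord_recl bstartS bstart0 addn0.
case: ltnP => hp.
  by rewrite add0n big1 // => a _; rewrite bstartS; lia.
by rewrite add1n; congr S; apply: eq_bigr => a _; rewrite bstartS leq_subRL.
Qed.

Lemma pos_cons m ms p :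
  pos (m :: ms) p = if (p < m)%N then p else pos ms (p - m).
Proof.
rewrite /pos blk_cons; case: ifP => _; first by rewrite bstart0 subn0.
by rewrite bstartS subnDA.
Qed.

Lemma blk_pos_bound ms p : (p < sumn ms)%N ->
  (blk ms p < size ms)%N /\ (pos ms p < nth 0%N ms (blk ms p))%N.
Proof.
elim: ms p => [|m ms IH] p //=.
rewrite blk_cons pos_cons; case: ifP => hpm //= hp.
by apply: IH; lia.
Qed.

Lemma blk_pos_dbl ms a q : (a < size ms)%N -> (q < nth 0%N ms a)%N ->
  [/\ (dbl ms a q < sumn ms)%N, blk ms (dbl ms a q) = a
     & pos ms (dbl ms a q) = q].
Proof.
rewrite /dbl; elim: ms a => [|m ms IH] [|a] //= ha hq.
  by rewrite bstart0 add0n blk_cons pos_cons hq; split => //; lia.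
have [h1 h2 h3] := IH a ha hq.
rewrite bstartS -addnA blk_cons pos_cons.
have -> : (m + (bstart ms a + q) < m)%N = false by rewrite ltnNge leq_addr.
rewrite addKn h2 h3.
by split => //; rewrite ltn_add2l.
Qed.

Lemma blk_pos_inj ms p p' : (p < sumn ms)%N -> (p' < sumn ms)%N ->
  blk ms p = blk ms p' -> pos ms p = pos ms p' -> p = p'.
Proof.
elim: ms p p' => [|m ms IH] p p' //=.
rewrite !blk_cons !pos_cons; case: ifP => h; case: ifP => h' //= hp hp' [hb] hq.
have := IH (p - m)%N (p' - m)%N; lia.
Qed.

Section BlockIndices.
Variable ms : seq nat.
Local Notation n := (sumn ms).

Lemma eq_blk_pos (s s0 : 'I_n) :
  (blk ms s == blk ms s0) && (pos ms s == pos ms s0) = (s == s0).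
Proof.
apply/andP/eqP => [[/eqP hb /eqP hp]|-> //]; apply: val_inj.
exact: (blk_pos_inj (ltn_ord s) (ltn_ord s0)).
Qed.

Lemma exists_blk_pos (i : 'I_n) q : (q < nth 0%N ms (blk ms i))%N ->
  exists s : 'I_n, blk ms s = blk ms i /\ pos ms s = q.
Proof.
have [hb _] := blk_pos_bound (ltn_ord i).
move=> hq; have [hd hb' hq'] := blk_pos_dbl hb hq.
by exists (Ordinal hd).
Qed.

Variable R : nzRingType.

Lemma cst_F_sym p q s : cst_F R ms p q s = cst_F R ms p s q.
Proof. by rewrite /cst_F addnC andbCA. Qed.

Lemma cst_F_unit (i k : 'I_n) :
  \sum_(j < n) unit_F R ms j * cst_F R ms i j k = (i == k)%:R.
Proof.
have [hb hp] := blk_pos_bound (ltn_ord i).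
have [j0 [hj0b hj0p]] := exists_blk_pos (leq_ltn_trans (leq0n _) hp).
rewrite (bigD1 j0) //= big1 ?addr0 => [|j hj].
  rewrite /unit_F /cst_F hj0b hj0p !eqxx mul1r add0n /=.
  by rewrite (eq_sym (pos ms i)) eq_blk_pos eq_sym; case: (i == k).
rewrite /unit_F /cst_F; case: eqP => [hj0|]; rewrite ?mul0r //.
rewrite mul1r; case: eqP => // hjb; case/negP: hj.
by rewrite -eq_blk_pos hjb hj0b hj0 hj0p !eqxx.
Qed.

Lemma sum_cst_F_mul (i j k l : 'I_n) :
  \sum_(s < n) cst_F R ms i j s * cst_F R ms s k l =
  if [&& blk ms j == blk ms i, blk ms k == blk ms i, blk ms l == blk ms i &
         pos ms i == (pos ms j + pos ms k + pos ms l)%N] then 1 else 0.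
Proof.
set C := [&& _, _, _ & _].
have term s : cst_F R ms i j s * cst_F R ms s k l =
    if (blk ms s == blk ms i) && (pos ms s == pos ms k + pos ms l)%N
    then (if C then 1 else 0) else 0.
  rewrite /cst_F /C; have [hs|hs] := eqVneq (blk ms s) (blk ms i); last first.
    by rewrite andbF mul0r.
  have [->|hps] /= := eqVneq (pos ms s) (pos ms k + pos ms l)%N; last first.
    by rewrite !andbF mulr0.
  rewrite hs addnA andbT.
  by case: (blk ms j == _); case: (blk ms k == _); case: (blk ms l == _);
     case: (pos ms i == _); rewrite ?mul0r ?mulr0 ?mul1r.
under eq_bigr do rewrite term.
case hC: C; last by rewrite big1 // => s _; case: ifP.
have [hb hp] := blk_pos_bound (ltn_ord i).
have [s0 [hs0b hs0p]] : exists s : 'I_n,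
    blk ms s = blk ms i /\ pos ms s = (pos ms k + pos ms l)%N.
  by apply: exists_blk_pos; case/and4P: hC => _ _ _ /eqP hi; lia.
rewrite -big_mkcond /= -hs0b -hs0p (eq_bigl (pred1 s0)) ?big_pred1_eq // => s.
exact: eq_blk_pos.
Qed.

Lemma cst_F_assoc (i j k l : 'I_n) :
  \sum_(s < n) cst_F R ms i j s * cst_F R ms s k l =
  \sum_(s < n) cst_F R ms i s l * cst_F R ms s j k.
Proof.
under [RHS]eq_bigr do rewrite cst_F_sym.
rewrite !sum_cst_F_mul (addnC _ (pos ms l)) addnA.
by case: (blk ms j == _); case: (blk ms k == _); case: (blk ms l == _).
Qed.
End BlockIndices.

Section Calculus.
Variable R : realType.

Lemma open_near_slices (D : set (R * R)) x t : open D -> D (x, t) ->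
  (\forall y \near x, D (y, t)) /\ (\forall s \near t, D (x, s)).
Proof.
move=> oD Dxt.
have [[A B] /= [nA nB] AB] : nbhs (x, t) D by exact: open_nbhs_nbhs.
split; [apply: filterS nA | apply: filterS nB] => y Ay; apply: AB;
  by split => //=; exact: nbhs_singleton.
Qed.

Lemma derive_affine_l (f : R -> R) (c t x : R) : derivable f x 1 ->
  'D_1 (fun y : R => y * c + t * f y) x = c + t * 'D_1 f x.
Proof.
move=> /derivableP df; apply: derive_val; apply: is_derive_eq.
by rewrite scaler0 add0r [c%:A]mulr1.
Qed.

Lemma derive_affine_r (f : R -> R) (c t : R) : derivable f t 1 ->
  'D_1 (fun s : R => c + s * f s) t = f t + t * 'D_1 f t.
Proof.
move=> /derivableP df; apply: derive_val; apply: is_derive_eq.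
by rewrite add0r mul1r [(f t)%:A]mulr1 addrC.
Qed.

Variable n : nat.
Implicit Types (Z : 'rV[R]_n -> 'rV[R]_n) (g : R -> 'rV[R]_n).

Lemma pdE Z v (i k : 'I_n) : differentiable Z v ->
  pd (Defs.comp Z i) k v = 'd Z v (basis_vec R k) ord0 i.
Proof.
move=> dZ; rewrite /pd /Defs.comp -deriveE //.
by rewrite derive_mx ?mxE //; exact: diff_derivable.
Qed.

Lemma derivable_comp_coord Z g x0 i :
  derivable g x0 1 -> differentiable Z (g x0) ->
  derivable (fun y => Z (g y) ord0 i) x0 1.
Proof.
move=> /derivable1_diffP dg dZ; apply: diff_derivable.
exact: differentiable_comp (differentiable_comp dg dZ)
                           (differentiable_coord _ _ _).
Qed.

Lemma derive_comp_coord Z g x0 i :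
  derivable g x0 1 -> differentiable Z (g x0) ->
  'D_1 (fun y => Z (g y) ord0 i) x0 =
  \sum_(k < n) pd (Defs.comp Z i) k (g x0) * 'D_1 g x0 ord0 k.
Proof.
move=> dg dZ; have dg' : differentiable g x0 by apply/derivable1_diffP.
have dZg : differentiable (Z \o g) x0 by exact: differentiable_comp.
have -> : 'D_1 (fun y => Z (g y) ord0 i) x0 = 'D_1 (Z \o g) x0 ord0 i.
  by rewrite derive_mx ?mxE //; exact: diff_derivable.
rewrite deriveE // diff_comp // /= -[in 'd g x0 1]deriveE //.
rewrite {1}(row_sum_delta ('D_1 g x0)) linear_sum summxE; apply: eq_bigr => k _.
by rewrite linearZ mxE pdE // mulrC.
Qed.
End Calculus.

Lemma cov_pencil (R : realType) n
    (Gamma : 'I_n -> 'I_n -> 'I_n -> 'rV[R]_n -> R)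
    (X Y : 'rV[R]_n -> 'rV[R]_n) (e : 'I_n -> R) v x t :
  (forall i j, \sum_(l < n) Gamma i j l v * e l = 0) ->
  (forall l, x * e l + t * X v ord0 l = Y v ord0 l) ->
  forall k i, cov Gamma Y k i v - t * cov Gamma X k i v =
              pd (Defs.comp Y i) k v - t * pd (Defs.comp X i) k v.
Proof.
move=> Ge solves k i; rewrite /cov.
suff -> : \sum_(l < n) Gamma i k l v * Y v ord0 l =
          t * \sum_(l < n) Gamma i k l v * X v ord0 l by ring.
under eq_bigr do rewrite -solves mulrDr mulrCA (mulrCA _ t).
by rewrite big_split /= -!mulr_sumr Ge mulr0 add0r.
Qed.

Section SolutionDerivatives.
Variables (R : realType) (n : nat) (X Y : 'rV[R]_n -> 'rV[R]_n) (e : 'I_n -> R).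
Variables (D : set (R * R)) (uu : R -> R -> 'rV[R]_n).
Hypothesis oD : open D.
Hypothesis solves : forall x t, D (x, t) ->
  forall i, x * e i + t * X (uu x t) ord0 i = Y (uu x t) ord0 i.
Variables (x t : R).
Hypothesis Dxt : D (x, t).
Hypothesis dX : differentiable X (uu x t).
Hypothesis dY : differentiable Y (uu x t).

Local Notation jac i k :=
  (pd (Defs.comp Y i) k (uu x t) - t * pd (Defs.comp X i) k (uu x t)).

Lemma sum_jac_derive (g : R -> 'rV[R]_n) s0 i :
  derivable g s0 1 -> g s0 = uu x t ->
  \sum_(k < n) jac i k * 'D_1 g s0 ord0 k =
  'D_1 (fun s => Y (g s) ord0 i) s0 - t * 'D_1 (fun s => X (g s) ord0 i) s0.
Proof.
move=> dg gs0; rewrite !derive_comp_coord ?gs0 // mulr_sumr -sumrB.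
by apply: eq_bigr => k _; ring.
Qed.

Lemma solution_dx i : derivable (fun y => uu y t) x 1 ->
  \sum_(k < n) jac i k * 'D_1 (fun y => uu y t) x ord0 k = e i.
Proof.
move=> du; rewrite sum_jac_derive //.
have [Dx _] := open_near_slices oD Dxt.
rewrite (@near_eq_derive _ _ _ _
  (fun y : R => y * e i + t * X (uu y t) ord0 i)).
  by rewrite derive_affine_l ?addrK //; exact: derivable_comp_coord.
by apply: filterS Dx => y Dy; rewrite -solves.
Qed.

Lemma solution_dt i : derivable (fun s => uu x s) t 1 ->
  \sum_(k < n) jac i k * 'D_1 (fun s => uu x s) t ord0 k = X (uu x t) ord0 i.
Proof.
move=> du; rewrite sum_jac_derive //.
have [_ Dt] := open_near_slices oD Dxt.
rewrite (@near_eq_derive _ _ _ _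
  (fun s : R => x * e i + s * X (uu x s) ord0 i)).
  by rewrite derive_affine_r ?addrK //; exact: derivable_comp_coord.
by apply: filterS Dt => s Ds; rewrite -solves.
Qed.
End SolutionDerivatives.

Unset Implicit Arguments.

Theorem theorem2p1 (R : realType) (ms : seq nat)
  (U : set 'rV[R]_(sumn ms))
  (X Y : 'rV[R]_(sumn ms) -> 'rV[R]_(sumn ms))
  (Gamma : 'I_(sumn ms) -> 'I_(sumn ms) -> 'I_(sumn ms) ->
           'rV[R]_(sumn ms) -> R)
  (D : set (R * R)) (uu : R -> R -> 'rV[R]_(sumn ms)) :
  (* block structure: r blocks of sizes m_alpha >= 1 *)
  all (fun m => 0 < m)%N ms ->
  open U ->
  (* X and Y are (differentiable) vector fields on U *)
  (forall u, U u -> differentiable X u) ->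
  (forall u, U u -> differentiable Y u) ->
  (* standing assumptions ensuring uniqueness of nabla:
     X^{1(alpha)} <> X^{1(beta)} for alpha <> beta, X^{2(alpha)} <> 0 *)
  (forall u, U u -> forall a b : 'I_(size ms), a != b ->
     forall (pa : (dbl ms a 0 < sumn ms)%N) (pb : (dbl ms b 0 < sumn ms)%N),
     X u ord0 (Ordinal pa) != X u ord0 (Ordinal pb)) ->
  (forall u, U u -> forall a : 'I_(size ms),
     forall (pa : (1 < nth 0%N ms a)%N) (p2 : (dbl ms a 1 < sumn ms)%N),
     X u ord0 (Ordinal p2) != 0) ->
  (* nabla is torsionless *)
  (forall i j k u, U u -> Gamma i j k u = Gamma i k j u) ->
  (* nabla_j e^i = 0 (e is constant, so this is Gamma^i_{jl} e^l = 0) *)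
  (forall i j u, U u ->
     \sum_(l < sumn ms) Gamma i j l u * unit_F R ms l = 0) ->
  (* d_nabla (X o) = 0 *)
  (forall i j k u, U u -> dnabla_circ ms Gamma X i j k u = 0) ->
  (* d_nabla (Y o) = 0 *)
  (forall i j k u, U u -> dnabla_circ ms Gamma Y i j k u = 0) ->
  (* u(x,t) : a differentiable function on an open domain D, valued in U,
     solving x e + t X(u) = Y(u) *)
  open D ->
  (forall x t, D (x, t) -> U (uu x t)) ->
  (forall x t, D (x, t) -> derivable (fun y => uu y t) x 1) ->
  (forall x t, D (x, t) -> derivable (fun s => uu x s) t 1) ->
  (forall x t, D (x, t) -> forall i : 'I_(sumn ms),
     x * unit_F R ms i + t * X (uu x t) ord0 i = Y (uu x t) ord0 i) ->
  (* conclusion: u_t^i = c^i_{jk} X^j(u) u_x^k *)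
  forall x t, D (x, t) -> forall i : 'I_(sumn ms),
    derive (fun s => uu x s) t 1 ord0 i =
    \sum_(j < sumn ms) \sum_(k < sumn ms)
      cst_F R ms i j k * X (uu x t) ord0 j *
      derive (fun y => uu y t) x 1 ord0 k.
Proof.
move=> _ _ dX dY _ _ _ Gamma_e closedX closedY oD DU dux dut solves x t Dxt i.
have Uv := DU _ _ Dxt; have dXv := dX _ Uv; have dYv := dY _ Uv.
pose c (i j k : 'I_(sumn ms)) := cst_F R ms i j k.
pose e (j : 'I_(sumn ms)) := unit_F R ms j.
pose A k s := cov Gamma Y k s (uu x t) - t * cov Gamma X k s (uu x t).
pose W s := \sum_(j < sumn ms) e j * A j s.
have jacE k j :
  pd (Defs.comp Y j) k (uu x t) - t * pd (Defs.comp X j) k (uu x t) =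
  cmul_mx c W j k.
  rewrite -(cov_pencil (fun i j => Gamma_e i j _ Uv) (solves _ _ Dxt)).
  apply: circ_closed_cmul_mx; first exact: cst_F_unit.
  by apply: circ_closedB => ? ? ?; [exact: closedY | exact: closedX].
have Wux : cmul c W (fun k => 'D_1 (fun y => uu y t) x ord0 k) = e.
  apply/funext => j; rewrite cmulE; last exact: cst_F_sym.
  rewrite /e -(solution_dx oD solves Dxt dXv dYv _ (dux _ _ Dxt)).
  by apply: eq_bigr => k _; rewrite jacE.
have Wut :
    cmul c W (fun k => 'D_1 (fun s => uu x s) t ord0 k) = X (uu x t) ord0.
  apply/funext => j; rewrite cmulE; last exact: cst_F_sym.
  rewrite -(solution_dt oD solves Dxt dXv dYv _ (dut _ _ Dxt)).
  by apply: eq_bigr => k _; rewrite jacE.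
have := cmul_solve (@cst_F_sym ms R) (@cst_F_unit ms R) (@cst_F_assoc ms R)
                   Wux Wut.
by move/(congr1 (fun f => f i)).
Qed.
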